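(* Let $T:\mathcal{H}(\mathbb{D})\to\mathcal{H}(\mathbb{D})$ be a linear transformation, let $X\subset\mathcal{H}(\mathbb{D})$ be a Banach space, and let $v$ be a radial weight. For $z\in\mathbb{D}$ define the linear maps $(K_z^H)_T, (K_{z,1}^{\mathcal{B}})_T: X\to\mathbb{C}$ by $(K_z^H)_T(f)=Tf(z)$ and $(K_{z,1}^{\mathcal{B}})_T(f)=(Tf)'(z)$, and let $(K_0^{\mathcal{B}})_T(f)=Tf(0)$. Then: (i) $T$ maps $X$ boundedly into $H_v$ if and only if $(K_z^H)_T\in X^*$ for every $z\in\mathbb{D}$ and $\sup_{z\in\mathbb{D}} v(z)\,\|(K_z^H)_T\|<\infty$. (ii) $T$ maps $X$ boundedly into $\mathcal{B}_v$ if and only if $(K_0^{\mathcal{B}})_T\in X^*$, $(K_{z,1}^{\mathcal{B}})_T\in X^*$ for every $z\in\mathbb{D}$, and $\sup_{z\in\mathbb{D}} v(z)\,\|(K_{z,1}^{\mathcal{B}})_T\|<\infty$.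
   Context: $\mathbb{D}$ is the open unit disk and $\mathcal{H}(\mathbb{D})$ the space of holomorphic functions on $\mathbb{D}$. A weight is a continuous function $v:\mathbb{D}\to(0,1]$; it is radial if $v(z)=v(|z|)$. $H_v=\{f\in\mathcal{H}(\mathbb{D}):\|f\|_{H_v}=\sup_{z\in\mathbb{D}}v(z)|f(z)|<\infty\}$ and $\mathcal{B}_v=\{f\in\mathcal{H}(\mathbb{D}):\sup_{z\in\mathbb{D}}v(z)|f'(z)|<\infty\}$, the latter a Banach space with norm $|f(0)|+\sup_{z}v(z)|f'(z)|$. $X^*$ denotes the (continuous) dual of $X$, and $\|\cdot\|$ of a functional is its dual norm. *)

From HB Require Import structures.
From mathcomp Require Import all_boot all_order all_algebra.
From mathcomp Require Import complex.
From mathcomp Require Import all_classical all_reals all_analysis.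
Import Order.TTheory GRing.Theory Num.Theory.
Import numFieldNormedType.Exports.

Set Implicit Arguments.
Unset Strict Implicit.
Unset Printing Implicit Defensive.

Local Open Scope ring_scope.
Local Open Scope complex_scope.
Local Open Scope classical_set_scope.

(* The complex plane R[i] as a normed module over itself
   (standard topology, |.| as norm). *)
Section ComplexNormed.
Variable R : rcfType.
HB.instance Definition _ := GRing.ComAlgebra.copy R[i] (R[i]^o).
HB.instance Definition _ := Vector.copy R[i] (R[i]^o).
HB.instance Definition _ := NormedModule.copy R[i] (R[i]^o).
End ComplexNormed.

Section Defs.
Variable R : realType.
Local Notation C := R[i].

Definition inD (z : C) : Prop := `|z| < 1.

(* f is holomorphic on D: complex differentiable at every point of D.
   Elements of H(D) are represented by functions C -> C whose values
   outside D are irrelevant. *)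
Definition holoD (f : C -> C) : Prop := forall z, inD z -> derivable f z 1.

(* T : H(D) -> H(D) is a linear transformation (on the representatives:
   it preserves holomorphy, only depends on values on D, and is linear
   modulo equality on D). *)
Definition linear_on_HD (T : (C -> C) -> (C -> C)) : Prop :=
  [/\ (forall f, holoD f -> holoD (T f)),
      (forall f g, holoD f -> holoD g -> (forall z, inD z -> f z = g z) ->
         forall z, inD z -> T f z = T g z) &
      (forall (a : C) f g, holoD f -> holoD g ->
         forall z, inD z -> T (fun w => a * f w + g w) z = a * T f z + T g z)].

Definition weight (v : C -> R) : Prop :=
  (forall z, inD z -> {for z, continuous v}) /\
  (forall z, inD z -> 0 < v z <= 1).

Definition radial (v : C -> R) : Prop :=
  forall z w, inD z -> inD w -> `|z| = `|w| -> v z = v w.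

(* the Banach space X, a linear subspace of H(D) with its own complete norm:
   given as a complete normed C-module V together with a linear injection
   iota : V -> H(D) (injective modulo equality on D). *)
Definition subspace_of_HD (V : normedModType C) (iota : V -> (C -> C)) : Prop :=
  [/\ (forall x, holoD (iota x)),
      (forall (a : C) x y z, inD z -> iota (a *: x + y) z = a * iota x z + iota y z) &
      (forall x y, (forall z, inD z -> iota x z = iota y z) -> x = y)].

Definition rnorm (V : normedModType C) (x : V) : R := complex.Re `|x|.

Definition in_Hv (v : C -> R) (f : C -> C) : Prop :=
  holoD f /\ exists M : R, forall z, inD z -> v z * rnorm (f z) <= M.

Definition Hv_norm (v : C -> R) (f : C -> C) : R :=
  sup [set v z * rnorm (f z) | z in inD].

Definition in_Bv (v : C -> R) (f : C -> C) : Prop :=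
  holoD f /\ exists M : R, forall z, inD z -> v z * rnorm (derive1 f z) <= M.

Definition Bv_norm (v : C -> R) (f : C -> C) : R :=
  rnorm (f 0) + sup [set v z * rnorm (derive1 f z) | z in inD].

Definition in_dual (V : normedModType C) (phi : V -> C) : Prop :=
  (forall (a : C) x y, phi (a *: x + y) = a * phi x + phi y) /\ continuous phi.

Definition dual_norm (V : normedModType C) (phi : V -> C) : R :=
  sup [set rnorm (phi x) | x in [set x : V | rnorm x <= 1]].

Definition bounded_into_Hv (V : normedModType C) (iota : V -> (C -> C))
    (T : (C -> C) -> (C -> C)) (v : C -> R) : Prop :=
  (forall x, in_Hv v (T (iota x))) /\
  exists M : R, forall x, Hv_norm v (T (iota x)) <= M * rnorm x.

Definition bounded_into_Bv (V : normedModType C) (iota : V -> (C -> C))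
    (T : (C -> C) -> (C -> C)) (v : C -> R) : Prop :=
  (forall x, in_Bv v (T (iota x))) /\
  exists M : R, forall x, Bv_norm v (T (iota x)) <= M * rnorm x.

Definition KH (V : normedModType C) (iota : V -> (C -> C))
    (T : (C -> C) -> (C -> C)) (z : C) : V -> C :=
  fun x => T (iota x) z.

Definition KB0 (V : normedModType C) (iota : V -> (C -> C))
    (T : (C -> C) -> (C -> C)) : V -> C :=
  fun x => T (iota x) 0.

Definition KB1 (V : normedModType C) (iota : V -> (C -> C))
    (T : (C -> C) -> (C -> C)) (z : C) : V -> C :=
  fun x => derive1 (T (iota x)) z.

End Defs.

From HB Require Import structures.
From mathcomp Require Import all_boot all_order all_algebra.
From mathcomp Require Import complex.
From mathcomp Require Import all_classical all_reals all_analysis.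
From mathcomp Require Import lra.
Import Order.TTheory GRing.Theory Num.Theory.
Import numFieldNormedType.Exports.
Set Implicit Arguments.
Unset Strict Implicit.
Unset Printing Implicit Defensive.

Local Open Scope ring_scope.
Local Open Scope complex_scope.
Local Open Scope classical_set_scope.

(* Both norms are suprema over z in D of v(z)|L_z f| for linear functionals
   L_z f = Tf(z), resp. L_z f = (Tf)'(z) (plus the term |Tf(0)| for B_v).
   Hence T is bounded iff v(z)|L_z f| <= M ||f|| uniformly in z.  A linear
   functional is continuous iff it is bounded, its dual norm being the best
   bound, so this uniform estimate says exactly that every L_z lies in X^*
   with v(z) ||L_z|| <= M. *)

Section RealNorm.
Context {R : realType}.

Lemma normr_rnorm {V : normedModType R[i]} (x : V) : `|x| = (rnorm x)%:C.
Proof. by apply/esym/RRe_real/ger0_real. Qed.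

Lemma rnorm_ge0 {V : normedModType R[i]} (x : V) : 0 <= rnorm x.
Proof. by rewrite -ler0c -normr_rnorm. Qed.

Lemma rnorm_gt0 {V : normedModType R[i]} (x : V) : (0 < rnorm x) = (x != 0).
Proof. by rewrite -ltcR -normr_rnorm normr_gt0. Qed.

Lemma rnorm0 {V : normedModType R[i]} : rnorm (0 : V) = 0.
Proof. by rewrite /rnorm normr0. Qed.

Lemma rnormZ {V : normedModType R[i]} (a : R[i]) (x : V) :
  rnorm (a *: x) = rnorm a * rnorm x.
Proof. by rewrite /rnorm normrZ (normr_rnorm a) (normr_rnorm x) -rmorphM. Qed.

Lemma rnorm_real (k : R) : 0 <= k -> rnorm (k%:C : R[i]) = k.
Proof. by move=> k0; rewrite /rnorm ger0_norm // ler0c. Qed.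

Lemma rnormM (a b : R[i]) : rnorm (a * b) = rnorm a * rnorm b.
Proof. exact: (rnormZ a b). Qed.

End RealNorm.

Section Dual.
Context {R : realType} {V : normedModType R[i]}.
Implicit Types (phi : V -> R[i]) (K : R).

Definition pack_linear {phi} (lin_phi : linear phi) : {linear V -> R[i]} :=
  HB.pack phi (GRing.isLinear.Build _ _ _ _ phi lin_phi).

Lemma in_dualP phi : linear phi ->
  in_dual phi <-> exists K, forall x, rnorm (phi x) <= K * rnorm x.
Proof.
move=> lin_phi; have f_cont := linear_bounded_continuous (pack_linear lin_phi).
split=> [[_ /f_cont/linear_boundedP]|[K phiK]].
- move=> /pinfty_ex_gt0[r r0 fr]; exists (complex.Re r) => x.
  by rewrite -lecR rmorphM /= -!normr_rnorm RRe_real ?gtr0_real.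
- split=> //; apply/f_cont/linear_boundedP; near=> r => x.
  rewrite (le_trans (_ : _ <= K%:C * `|x|)) //.
    by rewrite !normr_rnorm -rmorphM lecR.
  rewrite ler_wpM2r //; near: r; apply: nbhs_pinfty_ge.
  by apply/complex_realP; exists K.
Unshelve. all: by end_near.
Qed.

Lemma dual_norm_le phi K : 0 <= K ->
  (forall x, rnorm (phi x) <= K * rnorm x) -> dual_norm phi <= K.
Proof.
move=> K0 phiK; apply: ge_sup.
  by exists (rnorm (phi 0)), 0; rewrite //= rnorm0.
move=> _ [x /= x1 <-]; have := phiK x; have := rnorm_ge0 x; nra.
Qed.

Lemma le_dual_norm phi x :
  in_dual phi -> rnorm (phi x) <= dual_norm phi * rnorm x.
Proof.
move=> dphi; have [K phiK] := (in_dualP dphi.1).1 dphi.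
have [->|x0] := eqVneq x 0.
  by rewrite (linear0 (pack_linear dphi.1) : phi 0 = 0) !rnorm0 mulr0.
have r0 : 0 < rnorm x by rewrite rnorm_gt0.
set r := rnorm x in r0 *.
have bounded : has_ubound [set rnorm (phi y) | y in [set y : V | rnorm y <= 1]].
  exists `|K| => _ [y /= y1 <-]; have := phiK y; have := rnorm_ge0 y.
  have := ler_norm K; have := normr_ge0 K; nra.
have : rnorm (phi ((r^-1)%:C *: x)) <= dual_norm phi.
  apply: (ub_le_sup bounded); exists ((r^-1)%:C *: x) => //=.
  by rewrite rnormZ rnorm_real ?invr_ge0 ?(ltW r0) // -/r mulVf ?gt_eqF.
rewrite (linearZ_LR (pack_linear dphi.1) _ x : phi _ = _) rnormM.
by rewrite rnorm_real ?invr_ge0 ?(ltW r0) // mulrC ler_pdivrMr.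
Qed.

End Dual.

Section WeightedFamily.
Context {R : realType} {V : normedModType R[i]} {I : Type}.
Variables (P : set I) (w : I -> R) (phi : I -> V -> R[i]).
Hypotheses (w_gt0 : forall i, P i -> 0 < w i)
  (phi_lin : forall i, P i -> linear (phi i)).

Lemma weighted_dual_boundP :
  (exists M, forall i x, P i -> w i * rnorm (phi i x) <= M * rnorm x) <->
  (forall i, P i -> in_dual (phi i)) /\
  exists M, forall i, P i -> w i * dual_norm (phi i) <= M.
Proof.
split=> [[M wM]|[dphi [M wM]]]; last first.
  exists M => i x Pi; have := le_dual_norm x (dphi i Pi).
  have := wM i Pi; have := w_gt0 Pi; have := rnorm_ge0 x; nra.
have M0 : 0 <= Num.max M 0 by rewrite le_max lexx orbT.
have phiK i : P i -> forall x, rnorm (phi i x) <= Num.max M 0 / w i * rnorm x.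
  move=> Pi x; rewrite mulrAC ler_pdivlMr ?(w_gt0 Pi) // mulrC.
  by apply: le_trans (wM i x Pi) _; rewrite ler_wpM2r ?rnorm_ge0 // le_max lexx.
split=> [i Pi|].
  by apply/(in_dualP (phi_lin Pi)); exists (Num.max M 0 / w i); exact: phiK.
exists (Num.max M 0) => i Pi; rewrite mulrC -ler_pdivlMr ?(w_gt0 Pi) //.
by apply: dual_norm_le (phiK i Pi); rewrite divr_ge0 // ltW ?(w_gt0 Pi).
Qed.

End WeightedFamily.

Lemma sup_image_leP {R : realType} {T : Type} (A : set T) (g : T -> R) (B : R) :
  A !=set0 -> (exists M, forall t, A t -> g t <= M) ->
  sup [set g t | t in A] <= B <-> forall t, A t -> g t <= B.
Proof.
move=> [t0 At0] [M gM]; split=> [supB t At|gB].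
- apply: le_trans supB; apply: ub_le_sup; last by exists t.
  by exists M => _ [s As <-]; exact: gM.
- apply: ge_sup; first by exists (g t0), t0.
  by move=> _ [s As <-]; exact: gB.
Qed.

Section UnitDisk.
Context {R : realType}.

Lemma inD0 : inD (0 : R[i]).
Proof. by rewrite /inD normr0 ltr01. Qed.

Lemma inD_ball : @inD R = ball (0 : R[i]) 1.
Proof. by apply/funext => z; rewrite -ball_normE /= sub0r normrN. Qed.

Lemma near_inD (z : R[i]) : inD z -> \forall w \near z, inD w.
Proof.
by rewrite inD_ball => Dz; have := ball_open (0 : R[i]) 1; rewrite openE; apply.
Qed.

Lemma holoD_comb (a : R[i]) (f g : R[i] -> R[i]) :
  holoD f -> holoD g -> holoD (fun w => a * f w + g w).
Proof. by move=> hf hg z Dz; apply: derivableD; [apply: derivableZ|]; auto. Qed.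

End UnitDisk.

Section LinearOnHD.
Context {R : realType} {V : normedModType R[i]}.
Variables (T : (R[i] -> R[i]) -> (R[i] -> R[i])) (iota : V -> (R[i] -> R[i])).
Hypotheses (hT : linear_on_HD T) (hiota : subspace_of_HD iota).

Lemma holoD_T_iota x : holoD (T (iota x)).
Proof. by case: hT => + _ _; apply; case: hiota. Qed.

Lemma KH_linear z : inD z -> linear (KH iota T z).
Proof.
case: hT => T_holo T_local T_lin; case: hiota => iota_holo iota_lin _ Dz a x y.
rewrite /KH (T_local _ (fun w => a * iota x w + iota y w)) //.
- exact: T_lin.
- exact: holoD_comb.
- by move=> w Dw; exact: iota_lin.
Qed.

Lemma KB1_linear z : inD z -> linear (KB1 iota T z).
Proof.
move=> Dz a x y; rewrite /KB1 !derive1E.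
pose Tcomb w := a * T (iota x) w + T (iota y) w.
rewrite (@near_eq_derive _ _ _ _ Tcomb); last first.
  near=> w; have Dw : inD w by near: w; exact: near_inD.
  exact: (KH_linear Dw a x y).
have -> : Tcomb = a \*: T (iota x) + T (iota y) by [].
have T_iota_der u : derivable (T (iota u)) z 1 by exact: holoD_T_iota.
by rewrite deriveD ?deriveZ //; exact: derivableZ.
Unshelve. all: by end_near.
Qed.

End LinearOnHD.

Section WeightedSpaces.
Context {R : realType} {V : normedModType R[i]}.
Variables (T : (R[i] -> R[i]) -> (R[i] -> R[i])) (iota : V -> (R[i] -> R[i]))
  (v : R[i] -> R).
Hypothesis T_iota_holo : forall x, holoD (T (iota x)).

Lemma bounded_into_HvP : bounded_into_Hv iota T v <->
  exists M, forall z x, inD z -> v z * rnorm (KH iota T z x) <= M * rnorm x.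
Proof.
have D0 : @inD R !=set0 by exists 0; exact: inD0.
split=> [[Hv [M HvM]]|[M vM]].
- exists M => z x Dz; apply: le_trans _ (HvM x).
  pose g z := v z * rnorm (T (iota x) z).
  exact: (sup_image_leP (g := g) _ D0 (Hv x).2).1 (lexx _) z Dz.
- have Hv x : in_Hv v (T (iota x)).
    by split; [exact: T_iota_holo | exists (M * rnorm x) => z; exact: vM].
  split=> //; exists M => x.
  pose g z := v z * rnorm (T (iota x) z).
  by apply/(sup_image_leP (g := g) _ D0 (Hv x).2) => z; exact: vM.
Qed.

Lemma bounded_into_BvP : 0 <= v 0 -> bounded_into_Bv iota T v <->
  (exists M, forall x, rnorm (KB0 iota T x) <= M * rnorm x) /\
  exists M, forall z x, inD z -> v z * rnorm (KB1 iota T z x) <= M * rnorm x.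
Proof.
have D0 : @inD R !=set0 by exists 0; exact: inD0.
move=> v0; split=> [[Bv [M BvM]]|[[M0 KM0] [M1 KM1]]].
- pose g x z := v z * rnorm (derive1 (T (iota x)) z).
  have le_sup x z : inD z -> g x z <= sup [set g x z | z in @inD R].
    exact: (sup_image_leP (g := g x) _ D0 (Bv x).2).1 (lexx _) z.
  have sup_ge0 x : 0 <= sup [set g x z | z in @inD R].
    by apply: le_trans (le_sup x 0 inD0); rewrite mulr_ge0 ?rnorm_ge0.
  split; exists M; [move=> x | move=> z x Dz];
    apply: le_trans _ (BvM x); rewrite /Bv_norm.
    by rewrite /KB0 lerDl; exact: sup_ge0.
  by apply: le_trans (le_sup x z Dz) _; rewrite lerDr rnorm_ge0.
- have Bv x : in_Bv v (T (iota x)).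
    by split; [exact: T_iota_holo | exists (M1 * rnorm x) => z; exact: KM1].
  split=> //; exists (M0 + M1) => x; rewrite mulrDl.
  apply: lerD; first exact: KM0.
  pose g z := v z * rnorm (derive1 (T (iota x)) z).
  by apply/(sup_image_leP (g := g) _ D0 (Bv x).2) => z; exact: KM1.
Qed.

End WeightedSpaces.

Theorem theorem2p1 (R : realType) (T : (R[i] -> R[i]) -> (R[i] -> R[i]))
    (V : completeNormedModType R[i]) (iota : V -> (R[i] -> R[i]))
    (v : R[i] -> R) :
  linear_on_HD T -> subspace_of_HD iota -> weight v -> radial v ->
  (bounded_into_Hv iota T v <->
     (forall z, inD z -> in_dual (KH iota T z)) /\
     exists M : R, forall z, inD z -> v z * dual_norm (KH iota T z) <= M)
  /\
  (bounded_into_Bv iota T v <->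
     [/\ in_dual (KB0 iota T),
         (forall z, inD z -> in_dual (KB1 iota T z)) &
         exists M : R, forall z, inD z -> v z * dual_norm (KB1 iota T z) <= M]).
Proof.
move=> hT hiota [_ v_range] _.
have v_gt0 z : inD z -> 0 < v z by move=> /v_range /andP[].
have holo := holoD_T_iota hT hiota.
split.
- apply: iff_trans (bounded_into_HvP v holo) _.
  exact: weighted_dual_boundP v_gt0 (KH_linear hT hiota).
- apply: iff_trans (bounded_into_BvP holo (ltW (v_gt0 0 inD0))) _.
  have KB0_linear : linear (KB0 iota T) := KH_linear hT hiota inD0.
  have KB0P := in_dualP KB0_linear.
  have KB1P := weighted_dual_boundP v_gt0 (KB1_linear hT hiota).
  split=> [[/KB0P ? /KB1P[]]|[/KB0P ? ? ?]] //.
  by split=> //; apply/KB1P.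
Qed.
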